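(* Let $\theta,\phi,\rho\in\mathrm{Mat}_{s\times s}(\bar k[\sigma])$ satisfy $(\partial\theta-T\mathbf 1_s)^s=0$, $\theta\phi=\phi\rho$, $(\partial\rho-T\mathbf 1_s)^s=0$, and assume the map $x\mapsto x\phi$ on $\mathrm{Mat}_{1\times s}(\bar k[\sigma])$ is injective. Then $\det\partial\phi\ne0$.
   Context: $\bar k$ is the algebraic closure of $k=\mathbb F_q(T)$. $\bar k[\sigma]$ is the noncommutative polynomial ring in $\sigma$ with $\sigma x=x^{q^{-1}}\sigma$ for $x\in\bar k$. For a matrix $\phi=\sum_i a_{(i)}\sigma^i$ with entries in $\bar k[\sigma]$ (the $a_{(i)}$ matrices over $\bar k$), $\partial\phi:=a_{(0)}$. $\mathbf 1_s$ is the $s\times s$ identity matrix. *)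

From HB Require Import structures.
From mathcomp Require Import all_boot all_order all_algebra.
Set Implicit Arguments. Unset Strict Implicit. Unset Printing Implicit Defensive.
Import GRing.Theory.
Local Open Scope ring_scope.

Lemma qroot_ex (K : closedFieldType) (n : nat) (x : K) :
  exists y : K, y ^+ n.+1 == x.
Proof.
have [y Hy] := @solve_monicpoly K n.+1 (fun i => if i == 0%N then x else 0) isT.
exists y; apply/eqP; rewrite Hy big_ord_recl /= expr0 mulr1.
by rewrite big1 ?addr0 // => i _; rewrite mul0r.
Qed.

(* The q-th root map x |-> x^(1/q) on K (unique when K has characteristic p
   and q is a power of p, which is the case below). *)
Definition qroot (K : closedFieldType) (q : nat) (x : K) : K :=
  xchoose (qroot_ex q.-1 x).

(* An element of Mat_{m x n}(K[sigma]) is represented by its finite sequence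
   of coefficient matrices [a_(0); a_(1); ...], i.e. sum_i a_(i) sigma^i.
   scoef A i = a_(i) (zero beyond the end of the sequence). *)
Definition scoef (K : nzRingType) (m n : nat) (A : seq 'M[K]_(m, n)) (i : nat)
  : 'M[K]_(m, n) := nth 0 A i.

(* The derivative/constant term  \partial A = a_(0). *)
Definition sdel (K : nzRingType) (m n : nat) (A : seq 'M[K]_(m, n)) : 'M[K]_(m, n) :=
  scoef A 0.

(* k-th coefficient matrix of the product A B in K[sigma], with the twisted
   rule  sigma x = x^(q^-1) sigma, hence  (a sigma^i)(b sigma^j) =
   a b^(q^-i) sigma^(i+j)  (b^(q^-i) taken entrywise). *)
Definition smul (K : closedFieldType) (q : nat) (m n p : nat)
  (A : seq 'M[K]_(m, n)) (B : seq 'M[K]_(n, p)) (k : nat) : 'M[K]_(m, p) :=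
  \sum_(i < k.+1) scoef A i *m map_mx (iter i (qroot q)) (scoef B (k - i)).

From HB Require Import structures.
From mathcomp Require Import all_boot all_order all_algebra finfield zify.
Import GRing.Theory.
Local Open Scope ring_scope.
Set Implicit Arguments. Unset Strict Implicit. Unset Printing Implicit Defensive.

(* In degrees [< M], right multiplication by a sigma-polynomial is a block
   upper-triangular matrix whose [i]-th diagonal block is the [i]-fold [q]-th
   root twist of its constant term.  For theta and rho these blocks have the
   single eigenvalue [T^(q^-i)], and these are pairwise distinct because [T] is
   transcendental over [F_q].  Splitting off one diagonal block at a time, the
   relation theta phi = phi rho bounds the rank of the matrix of phi by the sum
   of the ranks of its diagonal blocks.  If [det (sdel phi) = 0], each of them
   has rank [< s], so the left kernel has dimension [>= M]; for [M] large
   compared with [deg phi] this kernel contains a nonzero [x] of low degree,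
   with [x phi = 0], contradicting injectivity. *)

Section FrobeniusRoot.
Variables (K : fieldType) (q : nat) (r : K -> K).
Hypothesis q_gt0 : (0 < q)%N.
Hypothesis frobD : forall x y : K, (x + y) ^+ q = x ^+ q + y ^+ q.
Hypothesis rK : forall x, r x ^+ q = x.

Lemma frobN (x : K) : (- x) ^+ q = - x ^+ q.
Proof.
apply/eqP; rewrite -subr_eq0 opprK -frobD addNr expr0n.
by case: q q_gt0.
Qed.

Lemma frob_inj : injective (fun x : K => x ^+ q).
Proof.
move=> x y /= xy; apply/eqP; rewrite -subr_eq0 -[_ == 0]andTb -q_gt0 -expf_eq0.
by rewrite frobD frobN xy subrr.
Qed.

Let rB : {morph r : x y / x - y}.
Proof. by move=> x y; apply: frob_inj; rewrite /= frobD frobN !rK. Qed.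

Let r_monoid : monoid_morphism r.
Proof.
split=> [|x y]; apply: frob_inj; first by rewrite /= rK expr1n.
by rewrite /= exprMn !rK.
Qed.

HB.instance Definition _ := GRing.isZmodMorphism.Build K K r rB.
HB.instance Definition _ := GRing.isMonoidMorphism.Build K K r r_monoid.

Lemma frob_root_rmorphism : exists f : {rmorphism K -> K}, f =1 r.
Proof. by exists r. Qed.

End FrobeniusRoot.

Section BlockTriangular.
Variable K : fieldType.

Lemma unitmx_expr n (A : 'M[K]_n) k : A \in unitmx -> A ^+ k \in unitmx.
Proof.
by move=> uA; elim: k => [|k IH]; rewrite ?unitmx1 // exprS unitmx_mul uA.
Qed.

Lemma nilpotent_subr_scalar_unitmx n (Y : 'M[K]_n) e c k :
  (Y - e%:M) ^+ k = 0 -> e != c -> Y - c%:M \in unitmx.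
Proof.
move=> Yk ec; rewrite -row_free_unit -kermx_eq0; apply/rowV0P => v /sub_kermxP vY.
have vYe : v *m (Y - e%:M) = (c - e) *: v.
  by rewrite -[Y](subrK c%:M) -addrA -raddfB mulmxDr vY add0r mul_mx_scalar.
have vYek j : v *m (Y - e%:M) ^+ j = (c - e) ^+ j *: v.
  elim: j => [|j IH]; first by rewrite expr0 mulmx1 scale1r.
  by rewrite exprSr -mulmxE mulmxA IH -scalemxAl vYe scalerA -exprSr.
apply/eqP; move: (vYek k); rewrite Yk mulmx0 => /esym/eqP.
by rewrite scalemx_eq0 expf_eq0 subr_eq0 eq_sym (negbTE ec) andbF.
Qed.

Lemma intertwine_expr n m (X : 'M[K]_m) (Y : 'M[K]_n) (P : 'M[K]_(m, n)) k :
  X *m P = P *m Y -> X ^+ k *m P = P *m Y ^+ k.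
Proof.
move=> XP; elim: k => [|k IH]; first by rewrite !expr0 mul1mx mulmx1.
by rewrite !exprSr -!mulmxE -mulmxA XP !mulmxA IH.
Qed.

Variables n1 n2 : nat.

Lemma block_ut_expr (A : 'M[K]_n1) B (D : 'M[K]_n2) k :
  exists B', block_mx A B 0 D ^+ k = block_mx (A ^+ k) B' 0 (D ^+ k).
Proof.
elim: k => [|k [B' IH]]; first by exists 0; rewrite !expr0 -scalar_mx_block.
exists (A *m B' + B *m D ^+ k); rewrite exprS IH -mulmxE mulmx_block.
by rewrite !mulmx0 !mul0mx !addr0 add0r !mulmxE -!exprS.
Qed.

Lemma block_ut_subr_scalar (A : 'M[K]_n1) B (D : 'M[K]_n2) c :
  block_mx A B 0 D - c%:M = block_mx (A - c%:M) B 0 (D - c%:M).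
Proof.
by rewrite [c%:M](scalar_mx_block n1 n2) opp_block_mx add_block_mx !oppr0 !addr0.
Qed.

Lemma rank_block_ut_factor m1 m2 (a : 'M[K]_(m1, n1)) (b : 'M[K]_(m1, n2))
    (d : 'M[K]_(m2, n2)) Z W :
  b = Z *m d + a *m W -> (\rank (block_mx a b 0 d) <= \rank a + \rank d)%N.
Proof.
move=> bE; have -> : block_mx a b 0 d =
    block_mx 1%:M Z 0 1%:M *m block_mx a 0 0 d *m block_mx 1%:M W 0 1%:M.
  rewrite !mulmx_block !mulmx0 !mul0mx !mulmx1 !mul1mx !addr0 !add0r.
  by rewrite mul0mx add0r bE addrC.
apply: leq_trans (mxrankM_maxl _ _) _; apply: leq_trans (mxrankM_maxr _ _) _.
by rewrite rank_diag_block_mx.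
Qed.

(* Sylvester-equation argument: raise the intertwining relation, shifted by
   [c], to the power [k]; the upper-left blocks of both powers vanish and the
   lower-right ones are invertible, which forces [b = Z d + a W]. *)
Lemma rank_block_ut_intertwine c k (A A' a : 'M[K]_n1) (B B' b : 'M[K]_(n1, n2))
    (D D' d : 'M[K]_n2) :
  block_mx A B 0 D *m block_mx a b 0 d = block_mx a b 0 d *m block_mx A' B' 0 D' ->
  (A - c%:M) ^+ k = 0 -> (A' - c%:M) ^+ k = 0 ->
  D - c%:M \in unitmx -> D' - c%:M \in unitmx ->
  (\rank (block_mx a b 0 d) <= \rank a + \rank d)%N.
Proof.
move=> E Ak A'k uD uD'.
have Ec : (block_mx A B 0 D - c%:M) *m block_mx a b 0 d =
          block_mx a b 0 d *m (block_mx A' B' 0 D' - c%:M).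
  by rewrite mulmxBl mulmxBr E scalar_mxC.
move: (intertwine_expr k Ec); rewrite !block_ut_subr_scalar.
have [Bk ->] := block_ut_expr (A - c%:M) B (D - c%:M) k.
have [Bk' ->] := block_ut_expr (A' - c%:M) B' (D' - c%:M) k.
rewrite Ak A'k !mulmx_block !mulmx0 !mul0mx !add0r => /eq_block_mx [_ Eb _ Ed].
set P := (D - c%:M) ^+ k in Eb Ed; set P' := (D' - c%:M) ^+ k in Eb Ed.
have uP : P \in unitmx by apply: unitmx_expr.
have uP' : P' \in unitmx by apply: unitmx_expr.
have dP' : d *m invmx P' = invmx P *m d.
  apply: (can_inj (mulKmx uP)).
  by rewrite mulmxA Ed mulmxK // mulmxA mulmxV // mul1mx.
apply: (@rank_block_ut_factor _ _ _ _ _ (Bk *m invmx P) (- (Bk' *m invmx P'))).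
have -> : b = (Bk *m d - a *m Bk') *m invmx P' by rewrite Eb addrC addKr mulmxK.
by rewrite mulmxBl mulmxN !mulmxA -!mulmxA dP' !mulmxA.
Qed.

End BlockTriangular.

Section TwistedProduct.
Variables (K : fieldType) (r : {rmorphism K -> K}).

Definition twist m n (f : nat -> 'M[K]_(m, n)) k := map_mx r (f k).

(* The coefficients of [f g] in [K[sigma]] with [sigma x = r x sigma]. *)
Definition tmul m n p (f : nat -> 'M[K]_(m, n)) (g : nat -> 'M[K]_(n, p)) k :=
  \sum_(i < k.+1) f i *m map_mx (iter i r) (g (k - i)%N).

Lemma map_mx_iter0 m n (A : 'M[K]_(m, n)) : map_mx (iter 0 r) A = A.
Proof. exact: map_mx_id. Qed.

Lemma map_mx_iterSr m n i (A : 'M[K]_(m, n)) :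
  map_mx (iter i r) (map_mx r A) = map_mx (iter i.+1 r) A.
Proof. by apply/matrixP => a b; rewrite !mxE iterSr. Qed.

Lemma map_mx_iterS m n i (A : 'M[K]_(m, n)) :
  map_mx r (map_mx (iter i r) A) = map_mx (iter i.+1 r) A.
Proof. by apply/matrixP => a b; rewrite !mxE iterS. Qed.

Lemma map_mx_iter_mx0 m n i : map_mx (iter i r) (0 : 'M[K]_(m, n)) = 0.
Proof.
by elim: i => [|i IH]; rewrite ?map_mx_iter0 // -map_mx_iterS IH map_mx0.
Qed.

Lemma eq_tmul m n p (f f' : nat -> 'M[K]_(m, n)) (g g' : nat -> 'M[K]_(n, p)) :
  f =1 f' -> g =1 g' -> tmul f g =1 tmul f' g'.
Proof. by move=> ff' gg' k; apply: eq_bigr => i _; rewrite ff' gg'. Qed.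

Lemma tmul0 m n p (f : nat -> 'M[K]_(m, n)) (g : nat -> 'M[K]_(n, p)) :
  tmul f g 0 = f 0%N *m g 0%N.
Proof. by rewrite /tmul big_ord1 map_mx_iter0. Qed.

Lemma tmulS m n p (f : nat -> 'M[K]_(m, n)) (g : nat -> 'M[K]_(n, p)) k :
  tmul f g k.+1 = f 0%N *m g k.+1 + tmul (fun k => f k.+1) (twist g) k.
Proof.
rewrite /tmul big_ord_recl map_mx_iter0; congr (_ + _).
by apply: eq_bigr => i _; rewrite /twist map_mx_iterSr.
Qed.

Lemma twist_tmul m n p (f : nat -> 'M[K]_(m, n)) (g : nat -> 'M[K]_(n, p)) :
  twist (tmul f g) =1 tmul (twist f) (twist g).
Proof.
move=> k; rewrite /twist /tmul raddf_sum; apply: eq_bigr => i _.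
by rewrite /= map_mxM map_mx_iterS map_mx_iterSr.
Qed.

Variable s : nat.

Fixpoint blockrow m M (f : nat -> 'M[K]_(m, s)) : 'M[K]_(m, M * s) :=
  match M return 'M[K]_(m, M * s) with
  | 0%N => 0
  | M'.+1 => row_mx (f 0%N) (blockrow M' (fun k => f k.+1))
  end.

(* The matrix of [x |-> x g] on sigma-polynomials of degree [< M], written as
   row vectors of [M] blocks: block [(i, j)] is [iter i r (g (j - i))]. *)
Fixpoint tmul_mx M (g : nat -> 'M[K]_s) : 'M[K]_(M * s) :=
  match M return 'M[K]_(M * s) with
  | 0%N => 0
  | M'.+1 =>
      block_mx (g 0%N) (blockrow M' (fun k => g k.+1)) 0 (tmul_mx M' (twist g))
  end.

Fixpoint blockcoef m M : 'M[K]_(m, M * s) -> nat -> 'M[K]_(m, s) :=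
  match M return 'M[K]_(m, M * s) -> nat -> 'M[K]_(m, s) with
  | 0%N => fun _ _ => 0
  | M'.+1 => fun v k => if k is k'.+1 then blockcoef (rsubmx v) k' else lsubmx v
  end.

Lemma eq_blockrow m M (f g : nat -> 'M[K]_(m, s)) :
  f =1 g -> blockrow M f = blockrow M g.
Proof.
by elim: M f g => [|M IH] f g fg //=; rewrite fg (IH _ (fun k => g k.+1)).
Qed.

Lemma blockrowD m M (f g : nat -> 'M[K]_(m, s)) :
  blockrow M f + blockrow M g = blockrow M (fun k => f k + g k).
Proof. by elim: M f g => [|M IH] f g /=; rewrite ?addr0 // add_row_mx IH. Qed.

Lemma mulmx_blockrow l m M (a : 'M[K]_(l, m)) (f : nat -> 'M[K]_(m, s)) :
  a *m blockrow M f = blockrow M (fun k => a *m f k).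
Proof. by elim: M f => [|M IH] f /=; rewrite ?mulmx0 // mul_mx_row IH. Qed.

Lemma blockrow_mul_tmul_mx m M (f : nat -> 'M[K]_(m, s)) g :
  blockrow M f *m tmul_mx M g = blockrow M (tmul f g).
Proof.
elim: M f g => [|M IH] f g /=; first by rewrite mulmx0.
rewrite mul_row_block mulmx0 addr0 IH mulmx_blockrow blockrowD tmul0.
by congr row_mx; apply: eq_blockrow => k; rewrite tmulS.
Qed.

Lemma eq_tmul_mx M (f g : nat -> 'M[K]_s) : f =1 g -> tmul_mx M f = tmul_mx M g.
Proof.
elim: M f g => [|M IH] f g fg //=.
rewrite fg (eq_blockrow _ (fun k => fg k.+1)) (IH _ (twist g)) // => k.
by rewrite /twist fg.
Qed.

Lemma tmul_mxM M (f g : nat -> 'M[K]_s) :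
  tmul_mx M f *m tmul_mx M g = tmul_mx M (tmul f g).
Proof.
elim: M f g => [|M IH] f g /=; first by rewrite mulmx0.
rewrite mulmx_block !mulmx0 !mul0mx !addr0 add0r IH tmul0.
congr block_mx; last exact: eq_tmul_mx (fun k => esym (twist_tmul f g k)).
have := blockrow_mul_tmul_mx M.+1 f g.
by rewrite /= mul_row_block mulmx0 addr0 => /eq_row_mx [_ ->].
Qed.

Lemma blockcoefD m M (u v : 'M[K]_(m, M * s)) k :
  blockcoef (u + v) k = blockcoef u k + blockcoef v k.
Proof. by elim: M u v k => [|M IH] u v [|k] /=; rewrite ?addr0 // linearD ?IH. Qed.

Lemma blockcoef0 m M k : blockcoef (0 : 'M[K]_(m, M * s)) k = 0.
Proof. by elim: M k => [|M IH] [|k] //=; rewrite linear0 // IH. Qed.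

Lemma blockcoef_row m M (f : nat -> 'M[K]_(m, s)) k :
  (k < M)%N -> blockcoef (blockrow M f) k = f k.
Proof.
elim: M f k => [|M IH] f [|k] //= ltk; first by rewrite row_mxKl.
by rewrite row_mxKr IH.
Qed.

Lemma blockcoef_mul_tmul_mx m M (v : 'M[K]_(m, M * s)) g k :
  (k < M)%N -> blockcoef (v *m tmul_mx M g) k = tmul (blockcoef v) g k.
Proof.
elim: M v g k => [|M IH] v g k //= ltk.
rewrite -[v]hsubmxK mul_row_block mulmx0 addr0.
case: k ltk => [|k] ltk; first by rewrite row_mxKl tmul0 /= row_mxKl.
rewrite !row_mxKr blockcoefD mulmx_blockrow blockcoef_row // IH // tmulS /=.
by rewrite row_mxKl.
Qed.

Lemma blockcoef_eq0 m M (v : 'M[K]_(m, M * s)) :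
  (forall k, (k < M)%N -> blockcoef v k = 0) -> v = 0.
Proof.
elim: M v => [|M IH] v v0 /=; first by apply/matrixP => i [].
rewrite -[v]hsubmxK [lsubmx v](v0 0%N isT) (IH (rsubmx v)) ?row_mx0 // => k ltk.
exact: (v0 k.+1).
Qed.

Fixpoint pid_blocks M N : 'M[K]_(M * s) :=
  match M return 'M[K]_(M * s) with
  | 0%N => 0
  | M'.+1 => block_mx (if N is 0%N then 0 else 1%:M) 0 0 (pid_blocks M' N.-1)
  end.

Lemma rank_pid_blocks M N : (N <= M)%N -> \rank (pid_blocks M N) = (N * s)%N.
Proof.
elim: M N => [|M IH] [|N] //= le; first by rewrite mxrank0.
  by rewrite rank_diag_block_mx mxrank0 IH.
by rewrite rank_diag_block_mx mxrank1 IH.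
Qed.

Lemma blockcoef_mul_pid_blocks m M N (w : 'M[K]_(m, M * s)) k :
  (N <= k)%N -> blockcoef (w *m pid_blocks M N) k = 0.
Proof.
elim: M N w k => [|M IH] N w k //= le.
rewrite -[w]hsubmxK mul_row_block !mulmx0 addr0 add0r.
case: k le => [|k] le; first by case: N le => // _; rewrite row_mxKl mulmx0.
by rewrite row_mxKr IH //; case: N le.
Qed.

End TwistedProduct.

Section TwistedRank.
Variables (K : fieldType) (r : {rmorphism K -> K}) (s : nat).

Lemma twist_subr_scalar_expr (X : 'M[K]_s) c k :
  (X - c%:M) ^+ k = 0 -> (map_mx r X - (r c)%:M) ^+ k = 0.
Proof.
move=> Xk; have map_expr (Y : 'M[K]_s) j : map_mx r (Y ^+ j) = map_mx r Y ^+ j.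
  by elim: j => [|j IH]; rewrite ?map_mx1 // !exprS -!mulmxE map_mxM IH.
by rewrite -map_scalar_mx -map_mxB -map_expr Xk map_mx0.
Qed.

Lemma unitmx_tmul_mx_subr_scalar M (g : nat -> 'M[K]_s) c c' k :
  (g 0%N - c%:M) ^+ k = 0 -> (forall j, (j < M)%N -> iter j r c != c') ->
  tmul_mx r M g - c'%:M \in unitmx.
Proof.
elim: M g c => [|M IH] g c gk cc' /=; first by rewrite unitmxE det_mx00 unitr1.
rewrite block_ut_subr_scalar unitmxE det_ublock unitrM -!unitmxE.
rewrite (nilpotent_subr_scalar_unitmx gk (cc' 0%N isT)) /=.
apply: (IH _ (r c)); first exact: twist_subr_scalar_expr gk.
by move=> j ltj; rewrite -iterSr; apply: cc'.
Qed.

Lemma rank_tmul_mx_singular M (th ph rh : nat -> 'M[K]_s) c k :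
  tmul r th ph =1 tmul r ph rh ->
  (th 0%N - c%:M) ^+ k = 0 -> (rh 0%N - c%:M) ^+ k = 0 ->
  (forall j, (0 < j)%N -> iter j r c != c) ->
  \det (ph 0%N) = 0 ->
  (\rank (tmul_mx r M ph) + M <= M * s)%N.
Proof.
elim: M th ph rh c => [|M IH] th ph rh c E thk rhk cj ph0.
  by rewrite mxrank0.
have EM : tmul_mx r M.+1 th *m tmul_mx r M.+1 ph =
          tmul_mx r M.+1 ph *m tmul_mx r M.+1 rh.
  by rewrite !tmul_mxM; apply: eq_tmul_mx.
have unit_twist (g : nat -> 'M[K]_s) :
    (g 0%N - c%:M) ^+ k = 0 -> tmul_mx r M (twist r g) - c%:M \in unitmx.
  move=> gk; apply: (unitmx_tmul_mx_subr_scalar (c := r c)).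
    exact: twist_subr_scalar_expr gk.
  by move=> j _; rewrite -iterSr; apply: cj.
have rk : (\rank (tmul_mx r M.+1 ph) <=
           \rank (ph 0%N) + \rank (tmul_mx r M (twist r ph)))%N.
  exact: rank_block_ut_intertwine EM thk rhk (unit_twist _ thk) (unit_twist _ rhk).
have rk_ph0 : (\rank (ph 0%N) < s)%N.
  have : ~~ (ph 0%N \in unitmx) by rewrite unitmxE ph0 unitr0.
  by rewrite -row_free_unit ltn_neqAle rank_leq_row andbT.
have E' : tmul r (twist r th) (twist r ph) =1 tmul r (twist r ph) (twist r rh).
  by move=> j; rewrite -!twist_tmul /twist E.
have cj' j : (0 < j)%N -> iter j r (r c) != r c.
  by move=> j_gt0; rewrite -iterSr iterS (inj_eq (fmorph_inj r)) cj.
have ph0' : \det (twist r ph 0%N) = 0 by rewrite det_map_mx ph0 rmorph0.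
have := IH _ _ _ _ E' (twist_subr_scalar_expr thk) (twist_subr_scalar_expr rhk).
move=> /(_ cj' ph0').
have := mulSn M s; lia.
Qed.

(* The left kernel of [tmul_mx (N + d) ph] is too large to avoid the subspace
   of sigma-polynomials of degree [< N]; beyond degree [N + d] the product
   vanishes for degree reasons. *)
Lemma tmul_left_kernel (ph : nat -> 'M[K]_s) d N :
  (forall k, (d <= k)%N -> ph k = 0) -> (d * s < N)%N ->
  (\rank (tmul_mx r (N + d) ph) + (N + d) <= (N + d) * s)%N ->
  exists x : nat -> 'rV[K]_s,
    [/\ ~ (forall k, x k = 0), forall k, (N <= k)%N -> x k = 0
      & forall k, tmul r x ph k = 0].
Proof.
set M := (N + d)%N => ph_d dsN rk; set Phi := tmul_mx r M ph in rk.
pose C := (kermx Phi :&: pid_blocks K s M N)%MS.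
have rC : (0 < \rank C)%N.
  have := mxrank_sum_cap (kermx Phi) (pid_blocks K s M N).
  have := rank_leq_col (kermx Phi + pid_blocks K s M N)%MS.
  have := mulnDl N d s; rewrite mxrank_ker rank_pid_blocks ?leq_addr // -/C; lia.
pose v := nz_row C.
have nz_v : v != 0 by rewrite nz_row_eq0 -mxrank_eq0 -lt0n.
have vC : (v <= C)%MS := nz_row_sub C.
have vPhi : v *m Phi = 0 by apply/sub_kermxP; apply: submx_trans vC (capmxSl _ _).
have /submxP [w vw] := submx_trans vC (capmxSr _ _).
have vN k : (N <= k)%N -> blockcoef v k = 0.
  by move=> Nk; rewrite vw blockcoef_mul_pid_blocks.
exists (blockcoef v); split=> // [v0|k].
  by move/eqP: nz_v; apply; apply: blockcoef_eq0 => k _.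
have [kM|Mk] := ltnP k M.
  by rewrite -blockcoef_mul_tmul_mx // vPhi blockcoef0.
apply: big1 => i _; have [iN|Ni] := ltnP i N; last by rewrite vN // mul0mx.
by rewrite ph_d ?map_mx_iter_mx0 ?mulmx0 // leq_subRL; lia.
Qed.

End TwistedRank.

Lemma exprD_card_pchar (F : finFieldType) (R : comNzRingType) p :
  p \in [pchar F] -> p \in [pchar R] ->
  forall x y : R, (x + y) ^+ #|F| = x ^+ #|F| + y ^+ #|F|.
Proof.
move=> pF pR x y; apply: exprDn_pchar.
rewrite (eq_pnat _ (pcharf_eq pR)) (card_pprimeChar pF) pnatX pnat_id //.
exact: pcharf_prime pF.
Qed.

Lemma iter_root_expn (R : pzSemiRingType) (r : R -> R) q :
  (forall x, r x ^+ q = x) -> forall j y, iter j r y ^+ (q ^ j) = y.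
Proof.
by move=> rK; elim=> [|j IH] y; rewrite ?expr1 // iterS expnS exprM rK IH.
Qed.

Lemma fracX_expn_neq (F : idomainType) (K : fieldType)
    (iota : {rmorphism {fraction {poly F}} -> K}) n :
  (1 < n)%N -> iota (tofrac 'X) ^+ n != iota (tofrac 'X).
Proof.
move=> n_gt1; rewrite -!rmorphXn -subr_eq0 -!rmorphB fmorph_eq0 tofrac_eq0.
rewrite subr_eq0; apply/eqP => /(congr1 (fun P : {poly F} => size P)).
by rewrite size_polyXn size_polyX => -[n1]; rewrite n1 in n_gt1.
Qed.

Lemma qrootK (K : closedFieldType) q :
  (0 < q)%N -> forall x : K, qroot q x ^+ q = x.
Proof.
move=> q_gt0 x; rewrite -[in X in _ ^+ X](prednK q_gt0).
exact/eqP/(xchooseP (qroot_ex _ x)).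
Qed.

Lemma smul_tmul (K : closedFieldType) q (r : {rmorphism K -> K}) m n p
    (A : seq 'M[K]_(m, n)) (B : seq 'M[K]_(n, p)) :
  r =1 qroot q -> smul q A B =1 tmul r (scoef A) (scoef B).
Proof.
by move=> rq k; apply: eq_bigr => i _; rewrite (eq_map_mx _ (eq_iter rq i)).
Qed.

Lemma scoef_mkseq (K : nzRingType) m n (x : nat -> 'M[K]_(m, n)) N :
  (forall k, (N <= k)%N -> x k = 0) -> scoef (mkseq x N) =1 x.
Proof.
move=> xN k; rewrite /scoef; have [kN|Nk] := ltnP k N; first by rewrite nth_mkseq.
by rewrite nth_default ?size_mkseq // xN.
Qed.

Theorem lemma4 (F : finFieldType) (K : closedFieldType)
  (iota : {rmorphism {fraction {poly F}} -> K})
  (Halg : integralRange iota)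
  (s : nat) (theta phi rho : seq 'M[K]_s) :
  let q := #|F| in
  let T := iota (tofrac 'X) in
  (sdel theta - T%:M) ^+ s = 0 ->
  (forall k, smul q theta phi k = smul q phi rho k) ->
  (sdel rho - T%:M) ^+ s = 0 ->
  (forall x y : seq 'rV[K]_s,
      (forall k, smul q x phi k = smul q y phi k) ->
      forall k, scoef x k = scoef y k) ->
  \det (sdel phi) != 0.
Proof.
move=> q T thT E rhT inj; apply/eqP => det0.
have [p _ pF] := finPcharP F.
have pK : p \in [pchar K].
  by apply/(rmorph_pchar iota)/(rmorph_pchar (@tofrac _))/(rmorph_pchar polyC).
have q_gt1 : (1 < q)%N := finNzRing_gt1 F.
have qK := @qrootK K _ (ltnW q_gt1).
have [r rq] := frob_root_rmorphism (ltnW q_gt1) (exprD_card_pchar pF pK) qK.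
have T_twist j : (0 < j)%N -> iter j r T != T.
  move=> j_gt0; have qj_gt1 := leq_ltn_trans j_gt0 (ltn_expl j q_gt1).
  apply: contraNneq (fracX_expn_neq iota qj_gt1) => jT.
  rewrite -/T -{1}jT iter_root_expn // => x.
  by rewrite rq qK.
have Et : tmul r (scoef theta) (scoef phi) =1 tmul r (scoef phi) (scoef rho).
  by move=> k; rewrite -!(smul_tmul _ _ rq) E.
pose d := size phi; pose N := (d * s).+1.
have rk := rank_tmul_mx_singular (N + d) Et thT rhT T_twist det0.
have phi_d k : (d <= k)%N -> scoef phi k = 0 by apply: nth_default.
have [x [x_nz xN x_phi]] := tmul_left_kernel phi_d (ltnSn _) rk.
apply: x_nz => k; rewrite -(scoef_mkseq xN) (inj _ [::]) ?/scoef ?nth_nil // => j.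
rewrite !(smul_tmul _ _ rq) (eq_tmul _ (scoef_mkseq xN) (frefl _)) x_phi.
by apply/esym/big1 => i _; rewrite /scoef nth_nil mul0mx.
Qed.
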